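(* Let $f:2^V\to\mathbb{Z}_{\ge0}$ be a connectivity function, $W\subseteq V$, and suppose $(C,V\setminus C,\emptyset)$ is a minimum $W$-improvement. Then $f(C\cap W')\le f(W')$ for every $W'\subseteq W$. Moreover, if $f(C\cap W')=f(W')$, then $(C\cup W', (V\setminus C)\setminus W', \emptyset)$ is also a minimum $W$-improvement.
   Context: A connectivity function $f:2^V\to\mathbb{Z}_{\ge0}$ ($V$ finite) satisfies $f(\emptyset)=0$, $f(X)=f(V\setminus X)$, and $f(X\cup Y)+f(X\cap Y)\le f(X)+f(Y)$. For $W\subseteq V$, a $W$-improvement is a tripartition $(C_1,C_2,C_3)$ of $V$ (pairwise disjoint, possibly empty, union $V$) with $f(C_i)<f(W)/2$, $f(C_i\cap W)<f(W)$, $f(C_i\cap(V\setminus W))<f(W)$ for each $i$. Its width is $\max_i f(C_i)$, its sum-width is $\sum_i f(C_i)$, and its arity is the number of nonempty $C_i$. A $W$-improvement is minimum if it has minimum width among all $W$-improvements, subject to that minimum arity, and subject to those minimum sum-width. *)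

From mathcomp Require Import all_boot.
Set Implicit Arguments. Unset Strict Implicit. Unset Printing Implicit Defensive.

Definition connectivity (V : finType) (f : {set V} -> nat) : Prop :=
  [/\ f set0 = 0,
      forall X : {set V}, f X = f (~: X) &
      forall X Y : {set V}, f (X :|: Y) + f (X :&: Y) <= f X + f Y].

Definition tripartition (V : finType) (C1 C2 C3 : {set V}) : Prop :=
  [/\ [disjoint C1 & C2], [disjoint C1 & C3], [disjoint C2 & C3] &
      C1 :|: C2 :|: C3 = [set: V]].

(* f(C) < f(W)/2 is written 2 f(C) < f(W) (exact over the rationals). *)
Definition good_part (V : finType) (f : {set V} -> nat) (W C : {set V}) : Prop :=
  [/\ 2 * f C < f W, f (C :&: W) < f W & f (C :&: ~: W) < f W].

Definition improvement (V : finType) (f : {set V} -> nat) (W C1 C2 C3 : {set V})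
  : Prop :=
  tripartition C1 C2 C3 /\
  [/\ good_part f W C1, good_part f W C2 & good_part f W C3].

Definition width (V : finType) (f : {set V} -> nat) (C1 C2 C3 : {set V}) : nat :=
  maxn (f C1) (maxn (f C2) (f C3)).

Definition sumwidth (V : finType) (f : {set V} -> nat) (C1 C2 C3 : {set V}) : nat :=
  f C1 + f C2 + f C3.

Definition arity (V : finType) (C1 C2 C3 : {set V}) : nat :=
  (C1 != set0) + (C2 != set0) + (C3 != set0).

Definition min_improvement (V : finType) (f : {set V} -> nat) (W C1 C2 C3 : {set V})
  : Prop :=
  improvement f W C1 C2 C3 /\
  forall D1 D2 D3 : {set V}, improvement f W D1 D2 D3 ->
    width f C1 C2 C3 <= width f D1 D2 D3 /\
    (width f D1 D2 D3 = width f C1 C2 C3 ->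
       arity C1 C2 C3 <= arity D1 D2 D3 /\
       (arity D1 D2 D3 = arity C1 C2 C3 ->
          sumwidth f C1 C2 C3 <= sumwidth f D1 D2 D3)).

From mathcomp Require Import all_boot zify.
Set Implicit Arguments. Unset Strict Implicit.

(* Submodularity applied to [C] and [W'] gives
   [f (C :|: W') + f (C :&: W') <= f C + f W'], so when [C :&: W'] is at least
   as expensive as [W'], moving [W'] to the side of [C] does not increase the
   width.  The same uncrossing, and posimodularity of the symmetric [f] for the
   complementary side, shows that the parts restricted to [W] do not grow
   either, while their parts outside [W] are unchanged: the moved
   bipartition is again a [W]-improvement.  Minimality of [C] forbids a
   strict decrease, and in case of equality the moved bipartition has the
   same width, arity 2 (the least possible) and the same sum-width. *)

Section Connectivity.
Variables (V : finType) (f : {set V} -> nat).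
Hypothesis f_conn : connectivity f.

Lemma f_set0 : f set0 = 0.
Proof. by case: f_conn. Qed.

Lemma f_setC X : f (~: X) = f X.
Proof. by case: f_conn => _ fC _; rewrite -fC. Qed.

Lemma f_submod X Y : f (X :|: Y) + f (X :&: Y) <= f X + f Y.
Proof. by case: f_conn. Qed.

Lemma f_posimod X Y : f (X :\: Y) + f (Y :\: X) <= f X + f Y.
Proof.
have := f_submod X (~: Y).
by rewrite setUC -setCD f_setC -setDE f_setC addnC.
Qed.

Section Uncrossing.
Variables (D W' Z : {set V}).
Hypothesis sW'Z : W' \subset Z.

Lemma uncross_setU : f W' <= f (D :&: W') -> f ((D :|: W') :&: Z) <= f (D :&: Z).
Proof.
have eU : D :&: Z :|: W' = (D :|: W') :&: Z by rewrite setIUl (setIidPl sW'Z).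
have := f_submod (D :&: Z) W'.
by rewrite eU -setIA (setIidPr sW'Z); lia.
Qed.

Lemma uncross_setD : f W' <= f (W' :\: D) -> f ((D :\: W') :&: Z) <= f (D :&: Z).
Proof.
have := f_posimod (D :&: Z) W'.
rewrite setDE setIAC -setDE setDIr (eqP (_ : W' :\: Z == set0)) ?setD_eq0 //.
by rewrite setU0; lia.
Qed.

End Uncrossing.

Lemma setIUC_sub (D W' W : {set V}) :
  W' \subset W -> (D :|: W') :&: ~: W = D :&: ~: W.
Proof.
move=> sW'W; have /eqP W'W0 : W' :&: ~: W == set0 by rewrite -setDE setD_eq0.
by rewrite setIUl W'W0 setU0.
Qed.

Lemma setDIC_sub (D W' W : {set V}) :
  W' \subset W -> (D :\: W') :&: ~: W = D :&: ~: W.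
Proof.
move=> sW'W; rewrite setDE -setIA; congr (_ :&: _).
by apply/setIidPr; rewrite setCS.
Qed.

Variables (W W' : {set V}).
Hypothesis sW'W : W' \subset W.

Lemma good_part_setU D :
  good_part f W D -> f W' <= f (D :&: W') -> good_part f W (D :|: W').
Proof.
case=> fD fDW fDWc le; split.
- by have := uncross_setU (subsetT W') le; rewrite !setIT; lia.
- by have := uncross_setU sW'W le; lia.
- by rewrite setIUC_sub.
Qed.

Lemma good_part_setD D :
  good_part f W D -> f W' <= f (W' :\: D) -> good_part f W (D :\: W').
Proof.
case=> fD fDW fDWc le; split.
- by have := uncross_setD (subsetT W') le; rewrite !setIT; lia.
- by have := uncross_setD sW'W le; lia.
- by rewrite setDIC_sub.
Qed.

End Connectivity.

Section Bipartitions.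
Variables (V : finType) (f : {set V} -> nat).
Hypothesis f_conn : connectivity f.

Lemma good_part_full W : ~ good_part f W [set: V].
Proof. by case=> _; rewrite setTI ltnn. Qed.

Lemma improvement_arity W D1 D2 D3 : improvement f W D1 D2 D3 -> 2 <= arity D1 D2 D3.
Proof.
case=> [[_ _ _ cover] [g1 g2 g3]]; rewrite /arity.
case: (eqVneq D1 set0) => [e1|_]; case: (eqVneq D2 set0) => [e2|_];
  case: (eqVneq D3 set0) => [e3|_] //=; subst;
  rewrite ?set0U ?setU0 in cover;
  [move: g1 | move: g3 | move: g2 | move: g1]; by rewrite cover => /good_part_full.
Qed.

Lemma improvement_bipart W C :
  good_part f W C -> good_part f W (~: C) -> improvement f W C (~: C) set0.
Proof.
move=> gC gCc; have [fC _ _] := gC.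
split; last split=> //.
- by split; rewrite ?disjoints_subset ?setCK ?setC0 ?subsetT ?setUCr ?setU0.
- by rewrite /good_part !set0I f_set0 //; split; lia.
Qed.

Lemma width_bipart C : width f C (~: C) set0 = f C.
Proof. by rewrite /width f_setC // f_set0 // maxn0 maxnn. Qed.

Lemma sumwidth_bipart C : sumwidth f C (~: C) set0 = (f C).*2.
Proof. by rewrite /sumwidth f_setC // f_set0 // addn0 addnn. Qed.

Lemma improvement_bipart_arity W C :
  improvement f W C (~: C) set0 -> arity C (~: C) set0 = 2.
Proof.
move=> imp; have := improvement_arity imp.
by rewrite /arity eqxx; case: (C != set0); case: (~: C != set0).
Qed.

Variables (W C C' : {set V}).
Hypothesis C_min : min_improvement f W C (~: C) set0.
Hypothesis C'_imp : improvement f W C' (~: C') set0.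

Lemma min_improvement_bipart_le : f C <= f C'.
Proof.
by have [_ /(_ _ _ _ C'_imp) [+ _]] := C_min; rewrite !width_bipart.
Qed.

Lemma min_improvement_bipart : f C' <= f C -> min_improvement f W C' (~: C') set0.
Proof.
move=> le; have eqC : f C' = f C by have := min_improvement_bipart_le; lia.
split=> // D1 D2 D3 imp.
have [imp_C min_C] := C_min; have [wD ar] := min_C _ _ _ imp.
rewrite width_bipart eqC -(width_bipart C); split=> // weq.
have [_ sw] := ar weq.
rewrite (improvement_bipart_arity C'_imp); split=> [|aeq].
  exact: improvement_arity imp.
rewrite sumwidth_bipart eqC -(sumwidth_bipart C); apply: sw.
by rewrite aeq (improvement_bipart_arity imp_C).
Qed.

End Bipartitions.

Theorem lemma6 (V : finType) (f : {set V} -> nat) (W C : {set V}) :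
  connectivity f ->
  min_improvement f W C (~: C) set0 ->
  forall W' : {set V}, W' \subset W ->
    f (C :&: W') <= f W' /\
    (f (C :&: W') = f W' ->
       min_improvement f W (C :|: W') (~: C :\: W') set0).
Proof.
move=> f_conn C_min W' sW'W.
have [[_ [gC gCc _]] _] := C_min.
have eCc : ~: C :\: W' = ~: (C :|: W') by rewrite setCU setDE.
have moved_imp : f W' <= f (C :&: W') ->
    improvement f W (C :|: W') (~: (C :|: W')) set0.
  move=> le; apply: improvement_bipart => //; first exact: good_part_setU.
  by rewrite -eCc; apply: good_part_setD; rewrite // setDE setCK setIC.
have submod := f_submod f_conn C W'.
have [le | lt] := leqP (f (C :&: W')) (f W'); last first.
  by have := min_improvement_bipart_le f_conn C_min (moved_imp (ltnW lt)); lia.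
split=> // eq; rewrite eCc.
by apply: (min_improvement_bipart f_conn C_min (moved_imp _)); lia.
Qed.
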